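(* The free group of rank $2$ is not weakly homogeneous.
   Context: A group $H$ is weakly homogeneous if for every isomorphism $\varphi:A\to B$ between finitely generated subgroups $A,B$ of $H$ such that both $\varphi$ and $\varphi^{-1}:B\to A$ extend to endomorphisms of $H$, the map $\varphi$ extends to an automorphism of $H$. *)

From mathcomp Require Import all_boot.
Set Implicit Arguments. Unset Strict Implicit. Unset Printing Implicit Defensive.

Section GroupNotions.
Variables (T : Type) (mul : T -> T -> T) (one : T) (inv : T -> T).

Fixpoint inlist (x : T) (s : seq T) : Prop :=
  match s with [::] => False | y :: s' => y = x \/ inlist x s' end.

Inductive gen (s : seq T) : T -> Prop :=
  | gen_elt x : inlist x s -> gen s x
  | gen_one : gen s one
  | gen_mul x y : gen s x -> gen s y -> gen s (mul x y)
  | gen_inv x : gen s x -> gen s (inv x).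

Definition endomorphism (f : T -> T) : Prop :=
  forall x y, f (mul x y) = mul (f x) (f y).

Definition automorphism (f : T -> T) : Prop :=
  endomorphism f /\ exists g : T -> T, (forall x, g (f x) = x) /\ (forall y, f (g y) = y).

(* Weak homogeneity.  A, B range over finitely generated subgroups (A = <sA>,
   B = <sB>); phi : A -> B is an isomorphism with inverse psi : B -> A. *)
Definition weakly_homogeneous : Prop :=
  forall (sA sB : seq T) (phi psi : T -> T),
    (forall x, gen sA x -> gen sB (phi x)) ->
    (forall y, gen sB y -> gen sA (psi y)) ->
    (forall x, gen sA x -> psi (phi x) = x) ->
    (forall y, gen sB y -> phi (psi y) = y) ->
    (forall x y, gen sA x -> gen sA y -> phi (mul x y) = mul (phi x) (phi y)) ->
    (exists f, endomorphism f /\ forall x, gen sA x -> f x = phi x) ->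
    (exists g, endomorphism g /\ forall y, gen sB y -> g y = psi y) ->
    exists h, automorphism h /\ forall x, gen sA x -> h x = phi x.

End GroupNotions.

(* A letter (i, e): generator i (false = a, true = b), e = true means inverse. *)
Definition letter := (bool * bool)%type.
Definition linv (l : letter) : letter := (l.1, ~~ l.2).

Fixpoint reduced (w : seq letter) : bool :=
  match w with
  | x :: ((y :: _) as w') => (y != linv x) && reduced w'
  | _ => true
  end.

Definition push (x : letter) (w : seq letter) : seq letter :=
  match w with
  | y :: w' => if y == linv x then w' else x :: w
  | [::] => [:: x]
  end.

Definition norm (w : seq letter) : seq letter := foldr push [::] w.

Lemma push_reduced x w : reduced w -> reduced (push x w).
Proof.
case: w => [|y w] //= Hw.
case: ifP => Hy.
  by case: w Hw => [|z w] //= /andP [].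
by rewrite /= Hy Hw.
Qed.

Lemma norm_reduced w : reduced (norm w).
Proof. by elim: w => [|x w IH] //=; apply: push_reduced. Qed.

Definition F2 : Type := {w : seq letter | reduced w}.

Definition F2mul (u v : F2) : F2 :=
  exist _ (norm (proj1_sig u ++ proj1_sig v)) (norm_reduced _).
Definition F2one : F2 := exist _ [::] (erefl true).
Definition F2inv (u : F2) : F2 :=
  exist _ (norm (rev (map linv (proj1_sig u)))) (norm_reduced _).

From HB Require Import structures.
From mathcomp Require Import all_boot fingroup.

Set Implicit Arguments. Unset Strict Implicit. Unset Printing Implicit Defensive.

(* Put a = F2a, b = F2b and w = a^2 b^3.  The endomorphisms a |-> w, b |-> b and
   a |-> a^-1, b |-> a exchange a and w, so weak homogeneity would give an
   automorphism h with h a = w.  Precomposition with h permutes Hom(F2, G) for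
   any finite group G, hence a and w would be killed by equally many
   homomorphisms F2 -> G.  For G = S3 this fails: a is killed by the 6
   homomorphisms with a |-> 1, while w is killed by 12, one for each solution
   of x^2 y^3 = 1. *)

Definition winv (w : seq letter) : seq letter := rev (map linv w).

Lemma linvK : involutive linv.
Proof. by case=> i e; rewrite /linv negbK. Qed.

Lemma winvK : involutive winv.
Proof. by move=> w; rewrite /winv map_rev revK -map_comp (eq_map linvK) map_id. Qed.

Lemma winv_cons l w : winv (l :: w) = winv w ++ [:: linv l].
Proof. by rewrite /winv /= rev_cons cats1. Qed.

Lemma reduced_behead l w : reduced (l :: w) -> reduced w.
Proof. by case: w => //= y w /andP[]. Qed.

Lemma push_reducedE l w : reduced (l :: w) -> push l w = l :: w.
Proof. by case: w => //= y w /andP[/negbTE->]. Qed.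

Lemma push_linvK l w : reduced w -> push l (push (linv l) w) = w.
Proof.
case: w => [|y w] /=; first by rewrite eqxx.
rewrite linvK; case: eqP => [->|_] yw; last by rewrite /= eqxx.
exact: push_reducedE.
Qed.

Lemma norm_id w : reduced w -> norm w = w.
Proof.
elim: w => [|l w IH] //= lw.
by rewrite IH ?push_reducedE // (reduced_behead lw).
Qed.

Lemma reduced_foldr_push t w : reduced t -> reduced (foldr push t w).
Proof. by move=> rt; elim: w => //= l w IH; apply: push_reduced. Qed.

Lemma foldr_push_push t l w :
  reduced t -> foldr push t (push l w) = push l (foldr push t w).
Proof.
move=> rt; case: w => [|y w] //=; case: eqP => [->|_] //=.
by rewrite push_linvK // reduced_foldr_push.
Qed.

Lemma foldr_push_norm t w : reduced t -> foldr push t (norm w) = foldr push t w.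
Proof. by move=> rt; elim: w => //= l w IH; rewrite foldr_push_push ?IH. Qed.

Lemma norm_cat u v : norm (u ++ v) = foldr push (norm v) u.
Proof. exact: foldr_cat. Qed.

Lemma norm_catl u v : norm (norm u ++ v) = norm (u ++ v).
Proof. by rewrite !norm_cat foldr_push_norm ?norm_reduced. Qed.

Lemma norm_catr u v : norm (u ++ norm v) = norm (u ++ v).
Proof. by rewrite !norm_cat norm_id ?norm_reduced. Qed.

Lemma norm_winv_cat w t : norm (winv w ++ w ++ t) = norm t.
Proof.
elim: w => //= l w IH.
rewrite winv_cons -catA norm_cat /=.
have := push_linvK (linv l) (norm_reduced (w ++ t)); rewrite linvK => ->.
by rewrite -norm_cat.
Qed.

Lemma norm_cat_winv w t : norm (w ++ winv w ++ t) = norm t.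
Proof. by rewrite -{1}(winvK w) norm_winv_cat. Qed.

Lemma F2mulA : associative F2mul.
Proof. by move=> u v w; apply: val_inj; rewrite /= norm_catl norm_catr catA. Qed.

Lemma F2mul1g : left_id F2one F2mul.
Proof. by case=> w rw; apply: val_inj; rewrite /= norm_id. Qed.

Lemma F2mulg1 : right_id F2one F2mul.
Proof. by case=> w rw; apply: val_inj; rewrite /= cats0 norm_id. Qed.

Lemma F2mulVg : left_inverse F2one F2inv F2mul.
Proof.
by move=> u; apply: val_inj; rewrite /= norm_catl -/(winv _) -[X in _ ++ X]cats0 norm_winv_cat.
Qed.

Lemma F2mulgV : right_inverse F2one F2inv F2mul.
Proof.
by move=> u; apply: val_inj; rewrite /= norm_catr -/(winv _) -[X in _ ++ X]cats0 norm_cat_winv.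
Qed.

HB.instance Definition _ := Choice.on F2.
HB.instance Definition _ := isGroup.Build F2 F2mulA F2mul1g F2mulg1 F2mulVg F2mulgV.

Local Open Scope group_scope.

Definition F2letter (l : letter) : F2 := exist _ [:: l] isT.
Definition F2a : F2 := F2letter (false, false).
Definition F2b : F2 := F2letter (true, false).

Lemma F2letterV l : F2letter (linv l) = (F2letter l)^-1.
Proof. exact: val_inj. Qed.

Lemma F2_prod_letters (u : F2) : u = \prod_(l <- val u) F2letter l.
Proof.
case: u => w; elim: w => [|l w IH] rw; rewrite [val _]/=.
  by rewrite big_nil; apply: val_inj.
rewrite big_cons -(IH (reduced_behead rw)); apply: val_inj => /=.
by rewrite norm_id ?push_reducedE // (reduced_behead rw).
Qed.

Section GroupMorphism.
Variables (G H : groupType) (f : G -> H).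
Hypothesis fM : {morph f : x y / x * y}.

Lemma morph1 : f 1 = 1.
Proof. by apply: (@mulgI _ (f 1)); rewrite -fM !mulg1. Qed.

Lemma morphV : {morph f : x / x^-1}.
Proof. by move=> x; apply/eqP; rewrite -mulg_eq1 -fM mulVg morph1. Qed.

Lemma morphX n : {morph f : x / x ^+ n}.
Proof. by move=> x; elim: n => [|n IH]; rewrite ?morph1 // !expgS fM IH. Qed.

End GroupMorphism.

Section Evaluation.
Variables (G : groupType) (x y : G).

Definition eval_letter (l : letter) : G :=
  let g := if l.1 then y else x in if l.2 then g^-1 else g.

Definition eval (u : F2) : G := \prod_(l <- val u) eval_letter l.

Lemma eval_letterV l : eval_letter (linv l) = (eval_letter l)^-1.
Proof. by case: l => [i []]; rewrite /eval_letter /= ?invgK. Qed.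

Lemma eval_push l w :
  \prod_(k <- push l w) eval_letter k = eval_letter l * \prod_(k <- w) eval_letter k.
Proof.
case: w => [|k w] /=; first by rewrite big_seq1 big_nil mulg1.
case: eqP => [->|_]; last by rewrite big_cons.
by rewrite big_cons eval_letterV mulVKg.
Qed.

Lemma eval_norm w : \prod_(k <- norm w) eval_letter k = \prod_(k <- w) eval_letter k.
Proof. by elim: w => [|l w IH] //=; rewrite eval_push IH big_cons. Qed.

Lemma evalM : {morph eval : u v / u * v}.
Proof. by move=> u v; rewrite /eval [val _]/= eval_norm big_cat. Qed.

Lemma eval_F2a : eval F2a = x.
Proof. by rewrite /eval big_seq1. Qed.

Lemma eval_F2b : eval F2b = y.
Proof. by rewrite /eval big_seq1. Qed.

End Evaluation.

Lemma morph_evalE (G : groupType) (f : F2 -> G) :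
  {morph f : u v / u * v} -> f =1 eval (f F2a) (f F2b).
Proof.
move=> fM u; rewrite {1}(F2_prod_letters u) (big_morph f fM (morph1 fM)).
apply: eq_bigr => -[i []] _; last by case: i.
by rewrite -[(i, true)]/(linv (i, false)) F2letterV morphV // eval_letterV; case: i.
Qed.

Section GeneratedSubgroup.
Variables (G H : groupType) (f g : G -> H).
Hypotheses (fM : {morph f : x y / x * y}) (gM : {morph g : x y / x * y}).

Lemma morph_gen (s : seq G) (t : seq H) :
  (forall x, inlist x s -> gen *%g 1 (@inv H) t (f x)) ->
  forall x, gen *%g 1 (@inv G) s x -> gen *%g 1 (@inv H) t (f x).
Proof.
move=> fs x; elim=> {x} [x /fs //||x y _ ? _ ?|x _ ?].
- by rewrite morph1 //; apply: gen_one.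
- by rewrite fM; apply: gen_mul.
- by rewrite morphV //; apply: gen_inv.
Qed.

Lemma eq_in_gen (s : seq G) :
  (forall x, inlist x s -> f x = g x) ->
  forall x, gen *%g 1 (@inv G) s x -> f x = g x.
Proof.
move=> fg x; elim=> {x} [x /fg //||x y _ fgx _ fgy|x _ fgx].
- by rewrite !morph1.
- by rewrite fM gM fgx fgy.
- by rewrite !morphV // fgx.
Qed.

End GeneratedSubgroup.

Section HomCount.
Variable gT : finGroupType.

(* By morph_evalE, this is the number of homomorphisms F2 -> gT killing u. *)
Definition hom_count (u : F2) : nat := #|[set p : gT * gT | eval p.1 p.2 u == 1]|.

Lemma hom_count_F2a : hom_count F2a = #|gT|.
Proof.
rewrite /hom_count -[#|gT|]mul1n -(cards1 (1 : gT)) -cardsT -cardsX.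
by apply: eq_card => -[x y]; rewrite !inE eval_F2a andbT.
Qed.

Lemma hom_count_automorphism h u :
  automorphism F2mul h -> hom_count (h u) = hom_count u.
Proof.
move=> [hM [k [_ hk]]].
pose Phi (p : gT * gT) := (eval p.1 p.2 (h F2a), eval p.1 p.2 (h F2b)).
have eval_Phi p v : eval (Phi p).1 (Phi p).2 v = eval p.1 p.2 (h v).
  rewrite [RHS](@morph_evalE _ (fun v => eval p.1 p.2 (h v))) //.
  by move=> v1 v2; rewrite /= hM evalM.
have Phi_inj : injective Phi.
  move=> [x1 y1] [x2 y2] eqPhi.
  have eq_eval v : eval x1 y1 v = eval x2 y2 v.
    by rewrite -(hk v) -(eval_Phi (x1, y1)) -(eval_Phi (x2, y2)) eqPhi.
  by have := eq_eval F2a; have := eq_eval F2b; rewrite !eval_F2a !eval_F2b => -> ->.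
rewrite /hom_count -[RHS](card_preimset _ Phi_inj); apply: eq_card => p.
by rewrite !inE eval_Phi.
Qed.

End HomCount.

Lemma card_count (T : finType) (s : seq T) (P : pred T) :
  uniq s -> (forall x, x \in s) -> #|P| = count P s.
Proof.
move=> s_uniq s_full; rewrite cardE /enum_mem size_filter -enumT.
have /permP-> : perm_eq (enum T) s.
  by apply: uniq_perm; rewrite ?enum_uniq // => x; rewrite mem_enum s_full.
exact: eq_count.
Qed.

(* (i, e) encodes the permutation x |-> i + (-1)^e x of Z/3. *)
Definition S3 : Type := 'I_3 * bool.
HB.instance Definition _ := Finite.on S3.

Definition add3 (i j : 'I_3) : 'I_3 := Ordinal (ltn_pmod (i + j) (isT : 0 < 3)).
Definition opp3 (i : 'I_3) : 'I_3 := Ordinal (ltn_pmod (3 - i) (isT : 0 < 3)).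

Definition S3mul (x y : S3) : S3 := (add3 x.1 (if x.2 then opp3 y.1 else y.1), x.2 (+) y.2).
Definition S3one : S3 := (ord0, false).
Definition S3inv (x : S3) : S3 := if x.2 then x else (opp3 x.1, false).

Lemma S3mulA : associative S3mul.
Proof. by do 3!case=> [[[|[|[|//]]] ?] []]; apply/eqP. Qed.

Lemma S3mul1 : left_id S3one S3mul.
Proof. by case=> [[[|[|[|//]]] ?] []]; apply/eqP. Qed.

Lemma S3mulV : left_inverse S3one S3inv S3mul.
Proof. by case=> [[[|[|[|//]]] ?] []]; apply/eqP. Qed.

HB.instance Definition _ := Finite_isGroup.Build S3 S3mulA S3mul1 S3mulV.

Definition S3_enum : seq S3 :=
  [seq (i, e) | i <- [:: @Ordinal 3 0 isT; @Ordinal 3 1 isT; @Ordinal 3 2 isT],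
                e <- [:: false; true]].

Lemma mem_S3_enum x : x \in S3_enum.
Proof. by case: x => [[[|[|[|//]]] ?] []]. Qed.

Lemma hom_count_S3_F2a : hom_count S3 F2a = 6.
Proof. by rewrite hom_count_F2a card_prod card_ord card_bool. Qed.

Definition F2w : F2 := F2a ^+ 2 * F2b ^+ 3.

Lemma eval_F2w (G : groupType) (x y : G) : eval x y F2w = x ^+ 2 * y ^+ 3.
Proof. by rewrite evalM !(morphX (@evalM _ x y)) eval_F2a eval_F2b. Qed.

Lemma hom_count_S3_F2w : hom_count S3 F2w = 12.
Proof.
rewrite /hom_count (eq_card (B := [pred p : S3 * S3 | p.1 ^+ 2 * p.2 ^+ 3 == 1])).
  rewrite (@card_count _ [seq (x, y) | x <- S3_enum, y <- S3_enum]) // => -[x y].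
  by apply/allpairsP; exists (x, y); rewrite !mem_S3_enum.
by move=> p; rewrite !inE eval_F2w.
Qed.

Lemma weakly_homogeneous_swap (G : groupType) (a b : G) (phi psi : G -> G) :
  weakly_homogeneous *%g 1 (@inv G) ->
  {morph phi : x y / x * y} -> {morph psi : x y / x * y} ->
  phi a = b -> psi b = a ->
  exists h, automorphism *%g h /\ h a = b.
Proof.
move=> WH phiM psiM phi_a psi_b.
have gen1 (c : G) : gen *%g 1 (@inv G) [:: c] c by apply: gen_elt; left.
have psiphiM : {morph psi \o phi : x y / x * y} by move=> x y /=; rewrite phiM psiM.
have phipsiM : {morph phi \o psi : x y / x * y} by move=> x y /=; rewrite psiM phiM.
case: (WH [:: a] [:: b] phi psi) => [||||||| h [hA hext]].
- by apply: morph_gen => // x [<-|[]]; rewrite phi_a; apply: gen1.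
- by apply: morph_gen => // y [<-|[]]; rewrite psi_b; apply: gen1.
- by apply: (eq_in_gen psiphiM) => // x [<-|[]]; rewrite /= phi_a psi_b.
- by apply: (eq_in_gen phipsiM) => // y [<-|[]]; rewrite /= psi_b phi_a.
- by move=> x y _ _; apply: phiM.
- by exists phi.
- by exists psi.
- by exists h; split; rewrite // hext ?phi_a.
Qed.

Lemma eval_F2w_F2a : eval F2a^-1 F2a F2w = F2a.
Proof. by rewrite eval_F2w expgS expg1 -mulgA expgS mulKg expgS mulKg. Qed.

Theorem mainTheorem6 : ~ weakly_homogeneous F2mul F2one F2inv.
Proof.
move=> WH.
have [h [hA h_a]] := weakly_homogeneous_swap WH (evalM F2w F2b) (evalM F2a^-1 F2a)
  (eval_F2a F2w F2b) eval_F2w_F2a.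
have := hom_count_automorphism S3 F2a hA.
by rewrite h_a hom_count_S3_F2w hom_count_S3_F2a.
Qed.
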